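(* Let $S$ be an entropy function for a finite set $X$, let $X'\subset X$, let $R$ be a new element not in $X$, $Y:=X'\cup\{R\}$, and let $T$ be the entropy function on $Y$ defined by $T(A):=S(A)$ and $T(A\cup\{R\}):=S(A\cup(X\setminus X'))$ for $A\subseteq X'$. Let $M:\mathbb R^X\to\mathbb R^Y$ be the linear map $(Mf)(x)=f(x)$ for $x\in X'$ and $(Mf)(R)=\sum_{x\in X\setminus X'}f(x)$. Then $F_T=M(F_S)$.
   Context: An entropy function for a finite set $X$ is a function $S:2^X\to[0,\infty)$ with $S(\emptyset)=0$, $S(A)+S(B)\ge S(A\cap B)+S(A\cup B)$ and $S(A)+S(B)\ge S(A\setminus B)+S(B\setminus A)$ for all $A,B\subseteq X$. An entanglement distribution function (EDF) for $S$ is a function $f:X\to\mathbb R$ (a vector in $\mathbb R^X$) with $\big|\sum_{x\in A}f(x)\big|\le S(A)$ for all $A\subseteq X$; $F_S$ denotes the set of all EDFs for $S$ (the entropohedron). *)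

From HB Require Import structures.
From mathcomp Require Import all_boot all_order all_algebra.
Set Implicit Arguments. Unset Strict Implicit. Unset Printing Implicit Defensive.
Import Order.TTheory GRing.Theory Num.Theory.
Local Open Scope ring_scope.

Definition entropy_function (R : realFieldType) (X : finType) (S : {set X} -> R) : Prop :=
  [/\ S set0 = 0,
      (forall A, 0 <= S A),
      (forall A B, S (A :&: B) + S (A :|: B) <= S A + S B) &
      (forall A B, S (A :\: B) + S (B :\: A) <= S A + S B)].

(* Entanglement distribution function f for S (membership in F_S). *)
Definition EDF (R : realFieldType) (X : finType) (S : {set X} -> R) (f : X -> R) : Prop :=
  forall A : {set X}, `| \sum_(x in A) f x | <= S A.

Definition subX (X : finType) (X' : {set X}) : finType := {x : X | x \in X'}.

(* Y := X' u {R}, where the new element R is represented by None. *)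
Definition Ytype (X : finType) (X' : {set X}) : finType := option (subX X').

Definition coreY (X : finType) (X' : {set X}) (B : {set Ytype X'}) : {set X} :=
  [set val y | y in [set y : subX X' | Some y \in B]].

Definition Tfun (R : realFieldType) (X : finType) (X' : {set X}) (S : {set X} -> R)
  (B : {set Ytype X'}) : R :=
  if None \in B then S (coreY B :|: ~: X') else S (coreY B).

Definition Mmap (R : realFieldType) (X : finType) (X' : {set X}) (f : X -> R)
  (y : Ytype X') : R :=
  match y with
  | Some x => f (val x)
  | None => \sum_(x in ~: X') f x
  end.

From HB Require Import structures.
From mathcomp Require Import all_boot all_order all_algebra.
From mathcomp Require Import lra.
Import Order.TTheory GRing.Theory Num.Theory.
Local Open Scope ring_scope.
Set Implicit Arguments. Unset Strict Implicit. Unset Printing Implicit Defensive.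

(* If f is an EDF of S, then M f is an EDF of T: the sum of M f over B is the
   sum of f over the preimage of B, whose entropy is T(B).  Conversely, an EDF
   g of T lifts to an f with M f = g that satisfies the EDF inequalities of S
   on every set that avoids K := X \ X' or contains K.  Such an f is refined
   one point a of K at a time: the new value t at a must satisfy
   |f(A) + t| <= S(A + a) and |f(A) + f(K) - t| <= S(A + K - a) for every A
   disjoint from K.  Weak monotonicity and submodularity of S show that any
   two of these intervals meet, hence all of them have a common point. *)

Lemma sum_option (R : nmodType) (T : finType) (F : option T -> R) :
  \sum_(y : option T) F y = F None + \sum_(z : T) F (Some z).
Proof.
rewrite (bigD1 None) //=; congr (_ + _).
rewrite -(big_imset F (h := Some) (A := predT)); last by move=> x y _ _ [].
apply: eq_bigl => -[z|] /=; apply/esym/imsetP; first by exists z.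
by case.
Qed.

Lemma sum_setUI (R : nmodType) (T : finType) (F : T -> R) (A B : {set T}) :
  \sum_(x in A) F x + \sum_(x in B) F x =
  \sum_(x in A :|: B) F x + \sum_(x in A :&: B) F x.
Proof.
rewrite (big_setID (A := A :|: B) A) setUK setDUl setDv set0U.
by rewrite (big_setID (A := B) A) setIC addrA addrAC.
Qed.

Lemma sum_setU_disjoint (R : nmodType) (T : finType) (F : T -> R) (A B : {set T}) :
  [disjoint A & B] -> \sum_(x in A :|: B) F x = \sum_(x in A) F x + \sum_(x in B) F x.
Proof. by move=> dAB; rewrite sum_setUI (disjoint_setI0 dAB) big_set0 addr0. Qed.

Lemma sum_setD (R : zmodType) (T : finType) (F : T -> R) (A B : {set T}) :
  \sum_(x in A) F x - \sum_(x in B) F x =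
  \sum_(x in A :\: B) F x - \sum_(x in B :\: A) F x.
Proof.
by rewrite (big_setID (A := A) B) (big_setID (A := B) A) setIC opprD addrACA subrr add0r.
Qed.

Lemma sum_eq_delta (R : nmodType) (T : finType) (A : {set T}) (a : T) (d : R) :
  \sum_(x in A) (if x == a then d else 0) = if a \in A then d else 0.
Proof.
have [aA|aNA] := boolP (a \in A).
  rewrite (big_setD1 a aA) /= eqxx big1 ?addr0 // => x.
  by rewrite !inE => /andP[/negPf ->].
by rewrite big1 // => x xA; case: eqP => // xa; rewrite -xa xA in aNA.
Qed.

Lemma common_point_of_intervals (R : realDomainType) (I : finType) (P : pred I)
    (L U : I -> R) i0 :
  P i0 -> (forall i j, P i -> P j -> L i <= U j) ->
  exists t, forall i, P i -> L i <= t <= U i.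
Proof.
move=> Pi0 LU; case: (arg_maxP L Pi0) => j Pj Lj.
by exists (L j) => i Pi; apply/andP; split; [exact: Lj | exact: LU].
Qed.

Lemma setUD_disjoint (T : finType) (A B C : {set T}) :
  [disjoint A & C] -> (A :|: C) :\: (B :|: C) = A :\: B.
Proof.
move=> dAC; apply/setP => z; rewrite !inE.
by case zC: (z \in C); rewrite ?(disjointFl dAC zC) !(orbT, orbF, andbF).
Qed.

Lemma eq_EDF (R : realFieldType) (X : finType) (S : {set X} -> R) (f g : X -> R) :
  f =1 g -> EDF S f -> EDF S g.
Proof. by move=> fg Ef A; rewrite -(eq_bigr _ (fun x _ => fg x)). Qed.

Section CoarseEDF.
Variables (R : realFieldType) (X : finType) (S : {set X} -> R).

(* EDF of the coarse-graining of S that merges the block K into one point. *)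
Definition coarse_EDF (K : {set X}) (f : X -> R) :=
  forall A : {set X}, [disjoint A & K] ->
    `|\sum_(x in A) f x| <= S A /\ `|\sum_(x in A :|: K) f x| <= S (A :|: K).

Lemma EDF_coarse (K : {set X}) (f : X -> R) : EDF S f -> coarse_EDF K f.
Proof. by move=> Ef A _; split; apply: Ef. Qed.

Lemma coarse_EDF_small (K : {set X}) (f : X -> R) :
  (#|K| <= 1)%N -> coarse_EDF K f -> EDF S f.
Proof.
move=> K1 fK A; have [dAK|nAK] := boolP [disjoint A & K]; first by case: (fK A dAK).
have [k Kk] : exists k, K = [set k].
  apply/cards1P; move: K1; rewrite leq_eqVlt ltnS leqn0 => /orP[// | /eqP/cards0_eq K0].
  by rewrite K0 disjoints_subset setC0 subsetT in nAK.
subst K; move: nAK; rewrite disjoint_sym disjoints1 negbK => kA.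
have dAk : [disjoint A :\ k & [set k]] by rewrite disjoint_sym disjoints1 !inE eqxx.
by rewrite -(setD1K kA) setUC; case: (fK _ dAk).
Qed.

End CoarseEDF.

Section Refinement.
Variables (R : realFieldType) (X : finType) (S : {set X} -> R).
Hypothesis HS : entropy_function S.
Variables (K : {set X}) (f : X -> R).
Hypothesis fK : coarse_EDF S K f.

Lemma coarse_EDF_sub_le (C A B : {set X}) :
  C \subset K -> [disjoint A & K] -> [disjoint B & K] ->
  \sum_(x in A) f x - \sum_(x in B) f x <= S (A :|: C) + S (B :|: C).
Proof.
move=> CK dA dB; have [_ _ _ S_wmono] := HS.
have := S_wmono (A :|: C) (B :|: C).
rewrite !setUD_disjoint ?(disjointWr CK) //.
have [/ler_normlP[? ?] _] := fK (disjointWl (subsetDl A B) dA).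
have [/ler_normlP[? ?] _] := fK (disjointWl (subsetDl B A) dB).
rewrite sum_setD; lra.
Qed.

Lemma coarse_EDF_cross_le (C A B : {set X}) :
  C \subset K -> [disjoint A & K] -> [disjoint B & K] ->
  `|\sum_(x in A) f x + \sum_(x in B) f x + \sum_(x in K) f x|
    <= S (A :|: C) + S (B :|: (K :\: C)).
Proof.
move=> CK dA dB; have [_ _ S_submod _] := HS.
have [eI eU] : (A :|: C) :&: (B :|: (K :\: C)) = A :&: B /\
                (A :|: C) :|: (B :|: (K :\: C)) = (A :|: B) :|: K.
  split; apply/setP => z; rewrite !inE; have [zK|zNK] := boolP (z \in K).
  - by rewrite (disjointFl dA zK) (disjointFl dB zK); case: (z \in C).
  - by rewrite (contraNF (subsetP CK z) zNK) /= !(andbF, orbF).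
  - by rewrite (disjointFl dA zK) (disjointFl dB zK) orbT; case: (z \in C).
  - by rewrite (contraNF (subsetP CK z) zNK) /= !(andbT, orbF).
have := S_submod (A :|: C) (B :|: (K :\: C)); rewrite eI eU.
have dAB : [disjoint A :|: B & K].
  by rewrite disjoints_subset subUset -!disjoints_subset dA.
have [_ /ler_normlP[? ?]] := fK dAB.
have [/ler_normlP[? ?] _] := fK (disjointWl (subsetIl A B) dA).
rewrite sum_setUI addrAC -sum_setU_disjoint //.
by move=> ?; apply/ler_normlP; split; lra.
Qed.

Lemma coarse_EDF_split (C : {set X}) : C \subset K ->
  exists t, forall A : {set X}, [disjoint A & K] ->
    `|\sum_(x in A) f x + t| <= S (A :|: C) /\
    `|\sum_(x in A) f x + \sum_(x in K) f x - t| <= S (A :|: (K :\: C)).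
Proof.
move=> CK; set c := \sum_(x in K) f x.
pose L (A : {set X}) := Num.max (- S (A :|: C) - \sum_(x in A) f x)
                                (\sum_(x in A) f x + c - S (A :|: (K :\: C))).
pose U (A : {set X}) := Num.min (S (A :|: C) - \sum_(x in A) f x)
                                (\sum_(x in A) f x + c + S (A :|: (K :\: C))).
have [t Ht] : exists t, forall A : {set X}, [disjoint A & K] -> L A <= t <= U A.
  apply: (common_point_of_intervals (P := fun A : {set X} => [disjoint A & K])
                                    (i0 := set0)).
    by rewrite disjoints_subset sub0set.
  move=> A B dA dB; rewrite ge_max !le_min.
  have := coarse_EDF_sub_le CK dB dA.
  have := coarse_EDF_sub_le (subsetDl K C) dA dB.
  have /ler_normlP[? ?] := coarse_EDF_cross_le CK dA dB.
  have /ler_normlP[? ?] := coarse_EDF_cross_le CK dB dA.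
  by rewrite /c => ? ?; rewrite -!andbA; repeat (apply/andP; split); lra.
exists t => A dA; have := Ht A dA.
rewrite ge_max le_min => /andP[/andP[? ?] /andP[? ?]].
by split; apply/ler_normlP; split; lra.
Qed.

Lemma coarse_EDF_refine (a k : X) : a \in K -> k \in K :\ a ->
  exists f1 : X -> R, [/\ coarse_EDF S (K :\ a) f1, {in ~: K, f1 =1 f} &
                          \sum_(x in K) f1 x = \sum_(x in K) f x].
Proof.
move=> aK kKa; have kK : k \in K := subsetP (subD1set K a) k kKa.
have aK1 : [set a] \subset K by rewrite sub1set.
have [t Ht] := coarse_EDF_split aK1.
set d := t - f a.
(* f1 moves the mass d from k to a: its sums agree with those of f over every
   set that holds both a and k or neither. *)
pose f1 x := f x + (if x == a then d else 0) - (if x == k then d else 0).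
have sum_f1 (A : {set X}) : \sum_(x in A) f1 x =
    \sum_(x in A) f x + (if a \in A then d else 0) - (if k \in A then d else 0).
  by rewrite sumrB big_split /= !sum_eq_delta.
have f1_off : {in ~: K, f1 =1 f}.
  move=> x /[!inE] xNK; rewrite /f1.
  have /negPf -> : x != a by apply: contraNneq xNK => ->.
  have /negPf -> : x != k by apply: contraNneq xNK => ->.
  by rewrite addr0 subr0.
exists f1; split => //; last by rewrite sum_f1 aK kK addrK.
move=> A dA; have kNA := disjointFl dA kKa.
have kAK : k \in A :|: K :\ a by rewrite inE kKa orbT.
have [aA|aNA] := boolP (a \in A); last first.
  have dAK : [disjoint A & K].
    rewrite disjoints_subset; apply/subsetP => z zA; rewrite inE; apply/negP => zK.
    have zKa : z \in K :\ a by rewrite !inE zK andbT; apply: contraNneq aNA => <-.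
    by rewrite (disjointFl dA zKa) in zA.
  have aNAK : a \in A :|: K :\ a = false by rewrite !inE (negPf aNA) eqxx.
  have [fA_le fAK_le] := Ht A dAK.
  rewrite !sum_f1 (negPf aNA) aNAK kNA kAK sum_setU_disjoint // !addr0 subr0.
  split; first by case: (fK dAK).
  by move: fAK_le; rewrite (big_setD1 a aK) /= /d; congr (`|_| <= _); lra.
set A0 := A :\ a.
have dA0K : [disjoint A0 & K].
  rewrite disjoints_subset; apply/subsetP => z; rewrite !inE => /andP[za zA].
  by apply/negP => zK; rewrite (disjointFl dA (_ : z \in K :\ a)) ?inE ?za ?zK in zA.
have eA : A0 :|: [set a] = A by rewrite setUC setD1K.
have eAK : A :|: K :\ a = A0 :|: K.
  by apply/setP => z; rewrite !inE; case: (eqVneq z a) => [->|]; rewrite ?aA ?aK ?orbT.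
have [fA_le _] := Ht A0 dA0K; have [_ fA0K_le] := fK dA0K.
have aAK : a \in A :|: K :\ a by rewrite inE aA.
rewrite !sum_f1 aA kNA aAK kAK addrK eAK subr0; split => //.
by move: fA_le; rewrite eA (big_setD1 a aA) /= /d; congr (`|_| <= _); lra.
Qed.

End Refinement.

Lemma coarse_EDF_extend (R : realFieldType) (X : finType) (S : {set X} -> R)
    (K : {set X}) (f : X -> R) :
  entropy_function S -> coarse_EDF S K f ->
  exists f' : X -> R, [/\ EDF S f', {in ~: K, f' =1 f} &
                          \sum_(x in K) f' x = \sum_(x in K) f x].
Proof.
move=> HS; have [n] := ubnP #|K|; elim: n K f => [|n IH] K f; first by rewrite ltn0.
move=> ltKn fK.
have [K_le1|K_gt1] := leqP #|K| 1.
  by exists f; split => //; apply: coarse_EDF_small K_le1 fK.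
have [a aK] : exists a, a \in K by apply/card_gt0P; apply: ltnW.
have [k kKa] : exists k, k \in K :\ a.
  by apply/card_gt0P; rewrite (cardsD1 a K) aK in K_gt1.
have [f1 [f1K f1_off f1_sum]] := coarse_EDF_refine HS fK aK kKa.
have ltKan : (#|K :\ a| < n)%N by rewrite (cardsD1 a K) aK add1n ltnS in ltKn.
have [f' [Ef' f'_off f'_sum]] := IH _ _ ltKan f1K.
exists f'; split => //.
  move=> x xNK; rewrite f'_off ?f1_off //.
  by rewrite !inE in xNK *; rewrite (negPf xNK) andbF.
rewrite (big_setD1 a aK) f'_sum f'_off ?inE ?eqxx //.
by rewrite -(big_setD1 a aK) f1_sum.
Qed.

Section Coarsening.
Variables (X : finType) (X' : {set X}).

Lemma coreY_subset (B : {set Ytype X'}) : coreY B \subset X'.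
Proof. by apply/subsetP => _ /imsetP[y _ ->]; apply: valP. Qed.

Lemma sum_Mmap (R : realFieldType) (f : X -> R) (B : {set Ytype X'}) :
  \sum_(y in B) Mmap f y =
  \sum_(x in coreY B) f x + (if None \in B then \sum_(x in ~: X') f x else 0).
Proof.
rewrite big_mkcond sum_option /= addrC; congr (_ + _).
rewrite /coreY big_imset /=; last by move=> x y _ _; apply: val_inj.
by rewrite [RHS]big_mkcond; apply: eq_bigr => z _; rewrite inE.
Qed.

Lemma EDF_Tfun_Mmap (R : realFieldType) (S : {set X} -> R) (f : X -> R) :
  EDF (Tfun S) (Mmap (X' := X') f) <-> coarse_EDF S (~: X') f.
Proof.
split => [Ef A dA | fX' B].
  have AX' : A \subset X' by rewrite -(setCK X') -disjoints_subset.
  pose B b := [set y : Ytype X' | if y is Some z then val z \in A else b].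
  have coreB b : coreY (B b) = A.
    apply/setP => x; apply/imsetP/idP => [[z]|xA]; first by rewrite !inE => zA ->.
    by exists (exist _ x (subsetP AX' x xA)); rewrite ?inE.
  have := Ef (B true); have := Ef (B false).
  by rewrite !sum_Mmap /Tfun !coreB /B !inE /= addr0 -sum_setU_disjoint.
have dB : [disjoint coreY B & ~: X'] by rewrite disjoints_subset setCK coreY_subset.
have [fB fBX'] := fX' _ dB.
by rewrite sum_Mmap /Tfun; case: (None \in B); rewrite ?addr0 // -sum_setU_disjoint.
Qed.

Lemma Tfun_set1_None (R : realFieldType) (S : {set X} -> R) :
  Tfun S [set None : Ytype X'] = S (~: X').
Proof.
rewrite /Tfun set11 (_ : coreY _ = set0) ?set0U //.
by apply/setP => x; rewrite inE; apply/imsetP => -[y]; rewrite !inE.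
Qed.

Lemma Mmap_lift (R : realFieldType) (g : Ytype X' -> R) :
  (~: X' = set0 -> g None = 0) -> exists f : X -> R, g =1 Mmap f.
Proof.
move=> gNone; pose f0 x := if insub x is Some y then g (Some y) else 0.
have f0_X' (y : subX X') : f0 (val y) = g (Some y) by rewrite /f0 valK.
have f0_off x : x \in ~: X' -> f0 x = 0 by rewrite inE => xNX'; rewrite /f0 insubN.
have [X'C0|[r rX']] := set_0Vmem (~: X').
  exists f0 => -[y|] /=; first by rewrite f0_X'.
  by rewrite X'C0 big_set0 gNone.
exists (fun x => f0 x + (if x == r then g None else 0)) => -[y|] /=.
  rewrite f0_X'; case: eqP => [yr|]; last by rewrite addr0.
  by move: (valP y) rX'; rewrite /= yr inE => ->.
by rewrite big_split /= big1 // add0r sum_eq_delta rX'.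
Qed.

End Coarsening.

Unset Implicit Arguments.
Set Strict Implicit.

Theorem corollary25 (R : realFieldType) (X : finType) (S : {set X} -> R)
  (X' : {set X}) :
  entropy_function S ->
  forall g : Ytype X' -> R,
    EDF (Tfun S) g <-> exists f : X -> R, EDF S f /\ (forall y, g y = Mmap f y).
Proof.
move=> HS g; split => [Eg | [f [Ef gf]]]; last first.
  by apply: eq_EDF (fun y => esym (gf y)) _; apply/EDF_Tfun_Mmap/EDF_coarse.
have [S0 _ _ _] := HS.
have [f0 gf0] : exists f0, g =1 Mmap f0.
  apply: Mmap_lift => X'C0; apply/eqP.
  by have := Eg [set None]; rewrite big_set1 Tfun_set1_None X'C0 S0 normr_le0.
have /EDF_Tfun_Mmap f0X' := eq_EDF gf0 Eg.
have [f [Ef f_X' f_sum]] := coarse_EDF_extend HS f0X'.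
exists f; split => // -[y|] /=; rewrite gf0 /=; last by rewrite f_sum.
by rewrite f_X' // setCK; apply: valP.
Qed.
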